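(* For each integer $d\ge 1$, the power series expansion at $x=0$ of the rational function $$\Delta_d(x)=\frac{1}{(1-x)^{d+1}-x^{d+1}}-\frac{1}{1-2x}$$ has only nonnegative coefficients. *)

From mathcomp Require Import all_boot all_order all_algebra.
Set Implicit Arguments. Unset Strict Implicit. Unset Printing Implicit Defensive.
Import Order.TTheory GRing.Theory Num.Theory.
Local Open Scope ring_scope.

(* Power series coefficients of 1/p(x) at x = 0, for a polynomial p with
   p(0) <> 0 (here p`_0 = 1 in our uses).  [inv_seq p n] is the list of the
   coefficients of x^0 .. x^n, computed by the standard recursion
   c_0 = 1/p_0,  c_n = -(1/p_0) * sum_{i=1}^n p_i c_{n-i}. *)
Fixpoint inv_seq (R : fieldType) (p : {poly R}) (n : nat) : seq R :=
  match n with
  | O => [:: (p`_0)^-1]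
  | n'.+1 =>
      let s := inv_seq p n' in
      rcons s (- (p`_0)^-1 * \sum_(1 <= i < n'.+2) p`_i * nth 0 s (n'.+1 - i)%N)
  end.

Definition inv_coef (R : fieldType) (p : {poly R}) (n : nat) : R :=
  nth 0 (inv_seq p n) n.

Definition denomD (d : nat) : {poly rat} :=
  (1 - 'X) ^+ d.+1 - 'X ^+ d.+1.

Definition denom2 : {poly rat} := 1 - 2%:R *: 'X.

Definition Delta_coef (d n : nat) : rat :=
  inv_coef (denomD d) n - inv_coef denom2 n.

From mathcomp Require Import all_boot all_order all_algebra.
From mathcomp Require Import ring.

Set Implicit Arguments.
Unset Strict Implicit.
Unset Printing Implicit Defensive.
Import Order.TTheory GRing.Theory Num.Theory.
Local Open Scope ring_scope.

(* Put Y = x/(1-x), so that 1/(1-x) = 1 + Y.  Then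
   (1-x)^(d+1) - x^(d+1) = (1-x)^(d+1) (1 - Y^(d+1)) and 1 - 2x = (1-x)(1-Y),
   whence, with 1/(1-Y) = (1 + Y + ... + Y^d)/(1 - Y^(d+1)),
     Delta_d = (1+Y)/(1-Y^(d+1)) * ((1+Y)^d - (1 + Y + ... + Y^d))
             = (1+Y)/(1-Y^(d+1)) * sum_(j <= d) (C(d,j) - 1) Y^j,
   a product of series with nonnegative coefficients.  All identities are
   used modulo x^(N+1), where the series become polynomials. *)

Section InverseCoefficients.
Variable R : fieldType.
Implicit Types p q : {poly R}.

Lemma size_inv_seq p n : size (inv_seq p n) = n.+1.
Proof. by elim: n => [|n IHn] //=; rewrite size_rcons IHn. Qed.

Lemma nth_inv_seq p n k : (k <= n)%N -> nth 0 (inv_seq p n) k = inv_coef p k.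
Proof.
elim: n => [|n IHn] le_kn; first by move: le_kn; rewrite leqn0 => /eqP ->.
have [lt_kn|lt_nk|-> //] := ltngtP k n.+1.
  by rewrite /= nth_rcons size_inv_seq lt_kn IHn.
by rewrite ltnNge le_kn in lt_nk.
Qed.

Lemma inv_coefS p n :
  inv_coef p n.+1 =
  - (p`_0)^-1 * \sum_(1 <= i < n.+2) p`_i * inv_coef p (n.+1 - i).
Proof.
rewrite {1}/inv_coef /= nth_rcons size_inv_seq ltnn eqxx; congr (_ * _).
apply: eq_big_nat => i /andP [i_gt0 _]; rewrite nth_inv_seq //.
by rewrite leq_subLR -addn1 addnC leq_add2r.
Qed.

(* The recursion defining [inv_seq] reads p * q = 1 in degrees 0 .. N. *)
Lemma inv_coef_unique p q N :
  (forall k, (k <= N)%N -> (p * q)`_k = (k == 0)%:R) ->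
  forall k, (k <= N)%N -> inv_coef p k = q`_k.
Proof.
move=> pq1.
have pq0 : p`_0 * q`_0 = 1 by have := pq1 0%N isT; rewrite coefM big_ord1.
have p0_neq0 : p`_0 != 0.
  by apply: contra_eq_neq pq0 => ->; rewrite mul0r eq_sym oner_eq0.
elim/ltn_ind=> -[|k] IHk le_kN.
  by rewrite /inv_coef /= -[q`_0](mulKf p0_neq0) pq0 mulr1.
have := pq1 k.+1 le_kN; rewrite coefM big_ord_recl subn0 /= => /eqP.
rewrite addr_eq0 => /eqP pq_k; rewrite inv_coefS big_add1 /= big_mkord.
rewrite (eq_bigr (fun i : 'I_k.+1 => p`_(bump 0 i) * q`_(k.+1 - bump 0 i))).
  by rewrite mulNr -mulrN -pq_k mulKf.
move=> i _; rewrite /bump /= add1n IHk // subSS ?ltnS ?leq_subr //.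
exact: leq_trans (leq_subr _ _) (ltnW le_kN).
Qed.

End InverseCoefficients.

Notation "p = q %[modp m ]" := (m %| p - q) : ring_scope.

Section CongruenceModp.
Variables (R : idomainType) (m : {poly R}).
Implicit Types a b c e : {poly R}.

Lemma eqp_mod_trans b a c :
  a = b %[modp m] -> b = c %[modp m] -> a = c %[modp m].
Proof.
move=> ab bc; have -> : a - c = (a - b) + (b - c) by rewrite addrA subrK.
exact: dvdp_add.
Qed.

Lemma eqp_modD a b c e :
  a = b %[modp m] -> c = e %[modp m] -> a + c = b + e %[modp m].
Proof. by move=> ab ce; rewrite opprD addrACA; apply: dvdp_add. Qed.

Lemma eqp_modN a b : a = b %[modp m] -> - a = - b %[modp m].
Proof. by move=> ab; rewrite -opprD dvdpNr. Qed.

Lemma eqp_modM a b c e :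
  a = b %[modp m] -> c = e %[modp m] -> a * c = b * e %[modp m].
Proof.
move=> ab ce; have -> : a * c - b * e = (a - b) * c + b * (c - e) by ring.
by apply: dvdp_add; [apply: dvdp_mulr | apply: dvdp_mull].
Qed.

Lemma eqp_modX a b k : a = b %[modp m] -> a ^+ k = b ^+ k %[modp m].
Proof.
move=> ab; elim: k => [|k IHk]; first by rewrite subrr dvdp0.
by rewrite !exprS eqp_modM.
Qed.

End CongruenceModp.

Lemma coef_eqp_modXn (R : fieldType) (a b : {poly R}) N k :
  a = b %[modp 'X^(N.+1)] -> (k <= N)%N -> a`_k = b`_k.
Proof.
move=> /dvdpP [c ab] le_kN; apply/eqP; rewrite -subr_eq0 -coefB ab coefMXn.
by rewrite ltnS le_kN.
Qed.

Lemma inv_coef_modXn (R : fieldType) (p q : {poly R}) N :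
  p * q = 1 %[modp 'X^(N.+1)] -> forall k, (k <= N)%N -> inv_coef p k = q`_k.
Proof.
move=> pq1; apply: inv_coef_unique => k le_kN.
by rewrite (coef_eqp_modXn pq1) ?coef1.
Qed.

Lemma geom_inv_modXn (R : idomainType) (z : {poly R}) N :
  'X %| z -> (1 - z) * \sum_(k < N.+1) z ^+ k = 1 %[modp 'X^(N.+1)].
Proof.
move=> Xz; have -> : (1 - z) * \sum_(k < N.+1) z ^+ k - 1 = - z ^+ N.+1.
  by rewrite -[1 - z]opprB mulNr -subrX1; ring.
by rewrite dvdpNr dvdp_exp2r.
Qed.

Lemma exprD1n_sub_sum (R : pzRingType) (y : R) d :
  (1 + y) ^+ d - \sum_(j < d.+1) y ^+ j
  = \sum_(j < d.+1) y ^+ j *+ ('C(d, j)).-1.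
Proof.
rewrite (addrC 1 y) exprD1n -sumrB; apply: eq_bigr => j _.
by rewrite -subn1 mulrnBr // bin_gt0 -ltnS.
Qed.

Section DeltaExpansion.
Variables d N : nat.

Local Notation X := ('X : {poly rat}).
(* [v], [Y] and [M] truncate 1/(1-x), x/(1-x) and 1/(1-Y^(d+1)). *)
Let u : {poly rat} := 1 - X.
Let Y : {poly rat} := X * \sum_(k < N) X ^+ k.
Let v : {poly rat} := 1 + Y.
Let M : {poly rat} := \sum_(k < N.+1) (Y ^+ d.+1) ^+ k.
Let S : {poly rat} := \sum_(j < d.+1) Y ^+ j.
Let P : {poly rat} := \sum_(j < d.+1) Y ^+ j *+ ('C(d, j)).-1.

Lemma mul_1subX_1addY : u * v = 1 %[modp 'X^(N.+1)].
Proof.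
suff -> : v = \sum_(k < N.+1) X ^+ k by rewrite geom_inv_modXn ?dvdpp.
by rewrite big_ord_recl /v /Y mulr_sumr; under eq_bigr do rewrite -exprS.
Qed.

Lemma mul_1subX_Y : u * Y = X %[modp 'X^(N.+1)].
Proof.
have -> : u * Y - X = u * v - 1 by rewrite /v /u; ring.
exact: mul_1subX_1addY.
Qed.

Lemma mul_1subYd_M : (1 - Y ^+ d.+1) * M = 1 %[modp 'X^(N.+1)].
Proof. by rewrite geom_inv_modXn // dvdp_exp ?dvdp_mulr ?dvdpp. Qed.

Lemma denomD_modXn :
  denomD d = u ^+ d.+1 * (1 - Y ^+ d.+1) %[modp 'X^(N.+1)].
Proof.
have -> : u ^+ d.+1 * (1 - Y ^+ d.+1) = u ^+ d.+1 - (u * Y) ^+ d.+1.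
  by rewrite mulrBr mulr1 -exprMn.
rewrite /denomD eqp_modD ?subrr ?dvdp0 // eqp_modN // eqp_modX //.
by rewrite -opprB dvdpNr mul_1subX_Y.
Qed.

Lemma denom2_modXn : denom2 = u * (1 - Y) %[modp 'X^(N.+1)].
Proof.
have -> : denom2 - u * (1 - Y) = u * Y - X.
  by rewrite /denom2 /u scaler_nat; ring.
exact: mul_1subX_Y.
Qed.

Lemma denomD_inv : denomD d * (v ^+ d.+1 * M) = 1 %[modp 'X^(N.+1)].
Proof.
have uv_YM := eqp_modM (eqp_modX d.+1 mul_1subX_1addY) mul_1subYd_M.
rewrite expr1n mulr1 in uv_YM; apply: eqp_mod_trans uv_YM.
have -> : (u * v) ^+ d.+1 * ((1 - Y ^+ d.+1) * M)
        = u ^+ d.+1 * (1 - Y ^+ d.+1) * (v ^+ d.+1 * M).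
  by rewrite [(u * v) ^+ _]exprMn; ring.
by rewrite eqp_modM ?denomD_modXn ?subrr ?dvdp0.
Qed.

Lemma denom2_inv : denom2 * (v * M * S) = 1 %[modp 'X^(N.+1)].
Proof.
have uv_YM := eqp_modM mul_1subX_1addY mul_1subYd_M.
rewrite mulr1 in uv_YM; apply: eqp_mod_trans uv_YM.
have -> : u * v * ((1 - Y ^+ d.+1) * M) = u * (1 - Y) * (v * M * S).
  by rewrite /S -opprB subrX1; ring.
by rewrite eqp_modM ?denom2_modXn ?subrr ?dvdp0.
Qed.

Lemma Delta_coef_expansion : Delta_coef d N = (v * M * P)`_N.
Proof.
rewrite /Delta_coef (inv_coef_modXn denomD_inv) //.
rewrite (inv_coef_modXn denom2_inv) // -coefB /P -exprD1n_sub_sum -/v -/S.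
suff -> : v ^+ d.+1 * M - v * M * S = v * M * (v ^+ d - S) by [].
by rewrite exprS; ring.
Qed.

(* Stated with the predicate [nneg_num_pred] rather than the qualifier
   [Num.nneg], which [polyOver] does not see as semiring-closed. *)
Lemma Delta_expansion_nneg : v * M * P \is a polyOver Num.Def.nneg_num_pred.
Proof.
have Y_nneg : Y \is a polyOver Num.Def.nneg_num_pred.
  rewrite rpredM ?polyOverX // rpred_sum // => k _.
  by rewrite rpredX ?polyOverX.
by rewrite !rpredM ?rpredD ?rpred1 ?rpred_sum // => j _;
  rewrite ?rpredMn ?rpredX.
Qed.

End DeltaExpansion.

Theorem theorem3p3 (d : nat) (hd : (1 <= d)%N) (n : nat) :
  0 <= Delta_coef d n.
Proof.
rewrite Delta_coef_expansion.
exact: (polyOverP (Delta_expansion_nneg d n)).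
Qed.
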